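(* Let $G$ be a graph with $n$ vertices, $m$ edges, and maximum degree at most $\Delta$, where $\Delta$ is a positive integer, and let $I=\{1,\ldots,\Delta\}$. Suppose $x\in\mathbb{R}_{\geq 0}$, $y\in\mathbb{R}$ and $z_i\in\mathbb{R}_{\geq 0}$ for $i\in I$ satisfy $z_i+z_j\geq j-i$ for all $i,j\in I$ with $i<j$, and $x+iy\geq iz_i$ for all $i\in I$. Then $irr(G)\leq nx+2my$.
   Context: All graphs are finite, simple and undirected. For a graph $G$ with edge set $E(G)$ and vertex degrees $d_G(u)$, the irregularity (in the sense of Albertson) is $irr(G)=\sum_{uv\in E(G)}|d_G(u)-d_G(v)|$. *)

From mathcomp Require Import all_boot all_order all_algebra.
Set Implicit Arguments. Unset Strict Implicit. Unset Printing Implicit Defensive.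
Import Order.TTheory GRing.Theory Num.Theory.

Definition simple_graph (T : finType) (e : rel T) : Prop :=
  irreflexive e /\ symmetric e.

Definition deg (T : finType) (e : rel T) (u : T) : nat := #|[set v | e u v]|.

(* Each undirected edge uv is represented once, as the ordered pair (u,v)
   with enum_rank u < enum_rank v. *)
Definition edges (T : finType) (e : rel T) : {set T * T} :=
  [set p | e p.1 p.2 && (enum_rank p.1 < enum_rank p.2)%N].

Definition nedges (T : finType) (e : rel T) : nat := #|edges e|.

Definition irr (R : numDomainType) (T : finType) (e : rel T) : R :=
  \sum_(p in edges e) `|(deg e p.1)%:R - (deg e p.2)%:R| .

From mathcomp Require Import all_boot all_order all_algebra.
Set Implicit Arguments. Unset Strict Implicit. Unset Printing Implicit Defensive.
Import Order.TTheory GRing.Theory Num.Theory.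
Local Open Scope ring_scope.

(* For an edge uv with degrees i = d(u) <= j = d(v) (both in 1..Delta),
   the hypothesis z_i + z_j >= j - i (or z_i, z_j >= 0 when i = j) gives
   |d(u) - d(v)| <= z_{d(u)} + z_{d(v)}.  Summing over the edges and
   regrouping by vertices (handshake lemma),
     irr(G) <= sum_u d(u) z_{d(u)} <= sum_u (x + d(u) y) = n x + 2 m y,
   where the middle step is the hypothesis x + i y >= i z_i for d(u) >= 1
   and x >= 0 for isolated vertices, and the last step is again the
   handshake lemma, sum_u d(u) = 2m. *)

Section Handshake.

Variables (R : numDomainType) (T : finType) (e : rel T).
Hypothesis simple_e : simple_graph e.

Lemma deg_gt0_of_adj (u v : T) : e u v -> (0 < deg e u)%N.
Proof. by move=> euv; rewrite /deg card_gt0; apply/set0Pn; exists v; rewrite inE. Qed.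

Lemma sum_adjacent_pairs (f : T -> R) :
  \sum_(p | e p.1 p.2) f p.1 = \sum_u (deg e u)%:R * f u.
Proof.
rewrite -(pair_big_dep xpredT (fun u v => e u v) (fun u _ => f u)) /=.
by apply: eq_bigr => u _; rewrite sumr_const mulr_natl /deg cardsE.
Qed.

(* Every ordered adjacent pair (u,v) is an edge either as (u,v) or as (v,u),
   and exactly one of the two, since e is symmetric and irreflexive. *)
Lemma sum_edges_both_orientations (g : T -> T -> R) :
  \sum_(p in edges e) (g p.1 p.2 + g p.2 p.1) = \sum_(p | e p.1 p.2) g p.1 p.2.
Proof.
case: simple_e => irr_e sym_e.
pose r := @enum_rank T.
rewrite big_split /= [RHS](bigID (fun p => (r p.1 < r p.2)%N)) /=.
congr (_ + _); first by apply: eq_bigl => p; rewrite /edges inE.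
rewrite (reindex_inj (h := fun p : T * T => (p.2, p.1))); last first.
  by move=> [a b] [c d] /= [-> ->].
apply: eq_bigl => [[u v]] /=; rewrite /edges inE /= (sym_e v u).
case euv: (e u v) => //=.
have r_neq : r u != r v.
  by apply: contraTneq euv => /enum_rank_inj ->; rewrite irr_e.
by rewrite ltnNge leq_eqVlt negb_or r_neq.
Qed.

Lemma handshake (f : T -> R) :
  \sum_(p in edges e) (f p.1 + f p.2) = \sum_u (deg e u)%:R * f u.
Proof. by rewrite (sum_edges_both_orientations (fun u _ => f u)) sum_adjacent_pairs. Qed.

Lemma sum_deg : \sum_u (deg e u)%:R = 2 * (nedges e)%:R :> R.
Proof.
have := handshake (fun _ => 1); rewrite sumr_const /nedges => hs.
rewrite (eq_bigr (fun u => (deg e u)%:R * 1)) => [|u _]; last by rewrite mulr1.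
by rewrite -hs -mulr2n mulr_natr.
Qed.

End Handshake.

Section Weights.

Variables (R : realFieldType) (Delta : nat) (x y : R) (z : nat -> R).

Lemma dist_le_weights (i j : nat) :
  (forall k, (1 <= k <= Delta)%N -> 0 <= z k) ->
  (forall i j, (1 <= i)%N -> (i < j)%N -> (j <= Delta)%N ->
     z i + z j >= j%:R - i%:R) ->
  (1 <= i <= Delta)%N -> (1 <= j <= Delta)%N ->
  `|i%:R - j%:R| <= z i + z j.
Proof.
move=> z_ge0 z_edge /andP[i1 iD] /andP[j1 jD].
case: (ltngtP i j) => [lt_ij | lt_ji | ->].
- by rewrite distrC ger0_norm ?subr_ge0 ?ler_nat 1?ltnW // z_edge.
- by rewrite ger0_norm ?subr_ge0 ?ler_nat 1?ltnW // [z _ + _]addrC z_edge.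
- by rewrite subrr normr0 addr_ge0 // z_ge0 ?j1.
Qed.

(* The vertex hypothesis extended to degree 0 thanks to x >= 0. *)
Lemma vertex_weight_bound (d : nat) :
  0 <= x ->
  (forall i, (1 <= i <= Delta)%N -> x + i%:R * y >= i%:R * z i) ->
  (d <= Delta)%N -> d%:R * z d <= x + d%:R * y.
Proof.
move=> x_ge0 z_vertex dD; case: (posnP d) => [-> | d_gt0].
  by rewrite !mul0r addr0.
by apply: z_vertex; rewrite d_gt0.
Qed.

End Weights.

Theorem mainTheorem5 (R : realFieldType) (T : finType) (e : rel T)
  (Delta : nat) (x y : R) (z : nat -> R) :
  simple_graph e ->
  (0 < Delta)%N ->
  (forall u : T, (deg e u <= Delta)%N) ->
  0 <= x ->
  (forall i : nat, (1 <= i <= Delta)%N -> 0 <= z i) ->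
  (forall i j : nat, (1 <= i)%N -> (i < j)%N -> (j <= Delta)%N ->
     z i + z j >= j%:R - i%:R) ->
  (forall i : nat, (1 <= i <= Delta)%N -> x + i%:R * y >= i%:R * z i) ->
  irr R e <= #|T|%:R * x + 2 * (nedges e)%:R * y.
Proof.
move=> simple_e _ degD x_ge0 z_ge0 z_edge z_vertex.
have deg_range u v : e u v -> (1 <= deg e u <= Delta)%N.
  by move=> euv; rewrite (deg_gt0_of_adj euv) degD.
have edge_bound : irr R e <= \sum_(p in edges e) (z (deg e p.1) + z (deg e p.2)).
  apply: ler_sum => p; rewrite /edges inE => /andP[ep _].
  have ep' : e p.2 p.1 by case: simple_e => _ ->.
  exact: dist_le_weights (deg_range _ _ ep) (deg_range _ _ ep').
apply: (le_trans edge_bound).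
rewrite (handshake simple_e (fun u => z (deg e u))) -(@sum_deg R _ _ simple_e).
rewrite -sum1_card natr_sum !mulr_suml -big_split /=.
apply: ler_sum => u _; rewrite mul1r.
exact: vertex_weight_bound x_ge0 z_vertex (degD u).
Qed.
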